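(* For $n\in\mathbb{N}$, \[ B_{2n+1}^{*}=\frac{(-1)^n}{4}+\frac12U_{2n}\!\left(\tfrac12\right)=\frac{(-1)^n}{4}+\frac{1}{\sqrt3}\sin\!\left(\frac{(2n+1)\pi}{3}\right). \]
   Context: $B_r$ denotes the Bernoulli numbers and $B_n^{*}:=\sum_{r=0}^{n}\binom{n+r}{2r}\frac{B_r}{n+r}$ for $n\ge1$ (Zagier's modified Bernoulli numbers). $U_k$ is the Chebyshev polynomial of the second kind, $U_k(\cos\theta)=\frac{\sin((k+1)\theta)}{\sin\theta}$. *)

From Stdlib Require Import Reals List.
Open Scope R_scope.

(* Bernoulli numbers with the convention B_1 = -1/2, via the standard
   recurrence  B_0 = 1,  B_m = -1/(m+1) * sum_{k=0}^{m-1} C(m+1,k) B_k.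
   bern_list m = [B_0; ...; B_m]. *)
Fixpoint bern_list (m : nat) : list R :=
  match m with
  | O => 1 :: nil
  | S p =>
      let l := bern_list p in
      l ++ ((- / INR (S (S p))) *
            sum_f_R0 (fun k => C (S (S p)) k * nth k l 0) p) :: nil
  end.

Definition bernoulli (n : nat) : R := nth n (bern_list n) 0.

(* Zagier's modified Bernoulli numbers (meaningful for n >= 1):
   B*_n = sum_{r=0}^n binom(n+r, 2r) B_r / (n+r). *)
Definition bstar (n : nat) : R :=
  sum_f_R0 (fun r => C (n + r) (2 * r) * bernoulli r / INR (n + r)) n.

(* Chebyshev polynomials of the second kind:
   U_0 = 1, U_1 = 2x, U_{k+2} = 2x U_{k+1} - U_k.
   chebU_pair k x = (U_k(x), U_{k+1}(x)). *)
Fixpoint chebU_pair (k : nat) (x : R) : R * R :=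
  match k with
  | O => (1, 2 * x)
  | S p => let (a, b) := chebU_pair p x in (b, 2 * x * b - a)
  end.

Definition chebU (k : nat) (x : R) : R := fst (chebU_pair k x).

(* Let L be the linear functional on R[X] with L(X^k) = B_k, so that B*_m = L(Q_m) for
   Q_m = sum_r C(m+r,2r)/(m+r) X^r.  The recurrence of the Bernoulli numbers says exactly
   L(p(X+1)) = L(p) + p'(0), and this law determines L; since p |-> L(p(-X)) - p'(0)
   satisfies it too, L(p(-X)) = L(p) + p'(0).  Now Q_m' = V_m / 2 with
   V_k(X) = U_(k-1)(X/2 + 1), and for odd m the polynomial Q_m is odd about -2,
   i.e. Q_m(-X-4) = -Q_m.  Combining three unit translations with the reflection gives
   L(Q_m) = Q_m'(-1) + Q_m'(-2)/2, where V_(2n+1)(-1) = U_2n(1/2) and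
   V_(2n+1)(-2) = U_2n(0) = (-1)^n.  The trigonometric form is U_k(cos t) sin t =
   sin((k+1)t) at t = pi/3. *)

From Stdlib Require Import Reals Lra Lia.

Section ChebyshevSine.
Local Open Scope R_scope.

Lemma sin_add_two_cos x t : sin (x + t) = 2 * cos t * sin x - sin (x - t).
Proof. rewrite sin_plus, sin_minus; ring. Qed.

Lemma chebU_pair_sin k t : sin t <> 0 ->
  chebU_pair k (cos t) = (sin (INR (S k) * t) / sin t, sin (INR (S (S k)) * t) / sin t).
Proof.
intro hs; induction k as [|k IH]; simpl chebU_pair.
- f_equal; simpl INR.
  + rewrite Rmult_1_l; field; exact hs.
  + replace ((1 + 1) * t) with (2 * t) by ring; rewrite sin_2a; field; exact hs.
- rewrite IH; f_equal.
  replace (INR (S (S (S k))) * t) with (INR (S (S k)) * t + t)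
    by (rewrite (S_INR (S (S k))); ring).
  replace (INR (S k) * t) with (INR (S (S k)) * t - t)
    by (rewrite (S_INR (S k)); ring).
  rewrite sin_add_two_cos; field; exact hs.
Qed.

Lemma chebU_half_sin k : / 2 * chebU k (/ 2) = / sqrt 3 * sin (INR (S k) * PI / 3).
Proof.
assert (h3 : sqrt 3 <> 0) by (apply Rgt_not_eq, sqrt_lt_R0; lra).
assert (hs : sin (PI / 3) <> 0) by (apply Rgt_not_eq, sin_gt_0; pose proof PI_RGT_0; lra).
replace (chebU k (/ 2)) with (chebU k (cos (PI / 3))) by (rewrite cos_PI3; f_equal; field).
unfold chebU; rewrite chebU_pair_sin by exact hs; cbn [fst].
rewrite sin_PI3, <- Rmult_div_assoc; field; exact h3.
Qed.

End ChebyshevSine.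

From HB Require Import structures.
From mathcomp Require Import all_boot all_order all_algebra.
From mathcomp Require Import Rstruct zify ring lra.
Import Order.TTheory GRing.Theory Num.Theory.
Local Open Scope ring_scope.

Section ScalarPoly.
Variable K : comNzRingType.

Lemma scalar_polyE (F : {scalar {poly K}}) p : F p = \sum_(i < size p) p`_i * F 'X^i.
Proof.
by rewrite -[in LHS](coefK p) poly_def linear_sum; under eq_bigr do rewrite linearZ.
Qed.

Lemma eq_scalar_poly (F G : {scalar {poly K}}) :
  (forall k, F 'X^k = G 'X^k) -> F =1 G.
Proof. by move=> FG p; rewrite !scalar_polyE; under eq_bigr do rewrite FG. Qed.

Lemma scalar_exp_Xadd1 (F : {scalar {poly K}}) k :
  F (('X + 1) ^+ k) = \sum_(j < k.+1) 'C(k, j)%:R * F 'X^j.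
Proof.
rewrite addrC exprDn linear_sum; apply: eq_bigr => j _.
by rewrite expr1n mul1r -scaler_nat linearZ.
Qed.

Lemma derivXnS_horner0 k : (('X^(k.+1) : {poly K})^`()).[0] = (k == 0)%:R.
Proof.
by rewrite derivXn hornerMn hornerXn; case: k => [|k] /=; rewrite ?expr0 // expr0n mul0rn.
Qed.

End ScalarPoly.

Lemma size_bern_list m : length (bern_list m) = m.+1.
Proof. by elim: m => [|m IH] //=; rewrite List.length_app IH /=; lia. Qed.

Lemma nth_bern_list k m : (k <= m)%N -> List.nth k (bern_list m) 0 = bernoulli k.
Proof.
move=> /subnK <-; rewrite /bernoulli; elim: (m - k)%N => [|p IH] //=.
by rewrite List.app_nth1 // size_bern_list; lia.
Qed.

Lemma C_binomial n k : (k <= n)%N -> C n k = 'C(n, k)%:R.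
Proof.
move=> /bin_fact/(congr1 (GRing.natmul (1 : R))); rewrite !natrM => eC.
rewrite /C !factE !INRE -eC RdivE -mulrA mulfV ?mulr1 //.
by rewrite mulf_eq0 !pnatr_eq0 negb_or -!lt0n !fact_gt0.
Qed.

Lemma bernoulliS p : bernoulli p.+1 =
  - (INR p.+2)^-1 * sum_f_R0 (fun k => C p.+2 k * bernoulli k) p.
Proof.
rewrite /bernoulli /= List.app_nth2 size_bern_list ?Nat.sub_diag //=.
congr (_ * _); apply: PartSum.sum_eq => i /ssrnat.leP hi.
by rewrite nth_bern_list.
Qed.

Lemma bernoulli_rec k :
  \sum_(j < k.+1) 'C(k.+1, j)%:R * bernoulli j = (k == 0)%:R.
Proof.
case: k => [|p]; first by rewrite big_ord1 bin0 mul1r.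
rewrite big_ord_recr /= binSn bernoulliS sum_f_R0E big_mkord INRE.
rewrite mulrA mulrN mulfV ?pnatr_eq0 // mulN1r.
rewrite -sumrB big1 // => i _.
by rewrite C_binomial; [exact: subrr | exact/leqW/ltnW].
Qed.

Definition bernL (p : {poly R}) : R := \sum_(i < size p) p`_i * bernoulli i.

Lemma bernL_widen n (p : {poly R}) :
  (size p <= n)%N -> bernL p = \sum_(i < n) p`_i * bernoulli i.
Proof.
move=> le_pn; rewrite /bernL (big_ord_widen n (fun i => p`_i * bernoulli i) le_pn).
rewrite big_mkcond /=; apply: eq_bigr => i _; case: ltnP => // le_pi.
by rewrite nth_default // mul0r.
Qed.

Fact bernL_is_scalar : scalar bernL.
Proof.
move=> a p q; set n := maxn (size p) (size q).
have le_pn : (size p <= n)%N by rewrite leq_maxl.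
have le_qn : (size q <= n)%N by rewrite leq_maxr.
have le_apq_n : (size (a *: p + q)%R <= n)%N.
  by rewrite (leq_trans (size_polyD _ _)) // geq_max le_qn (leq_trans (size_scale_leq _ _)).
rewrite !(bernL_widen n) //.
by rewrite mulr_sumr -big_split; apply: eq_bigr => i _; rewrite coefD coefZ mulrDl mulrA.
Qed.

HB.instance Definition _ := GRing.isLinear.Build R {poly R} R *%R bernL bernL_is_scalar.

Lemma bernL_Xn k : bernL 'X^k = bernoulli k.
Proof.
rewrite (@bernL_widen k.+1) ?size_polyXn // big_ord_recr /= coefXn eqxx mul1r.
by rewrite big1 ?add0r // => i _; rewrite coefXn (ltn_eqF (ltn_ord i)) mul0r.
Qed.

Lemma bernL_shift p : bernL (p \Po ('X + 1)) = bernL p + p^`().[0].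
Proof.
apply/eqP; rewrite -subr_eq; apply/eqP.
apply: (@eq_scalar_poly _
  ((bernL \o comp_poly ('X + 1)) \- (horner_eval 0 \o deriv)) bernL) => k /=.
rewrite horner_evalE comp_Xn_poly scalar_exp_Xadd1 /= bernL_Xn.
under eq_bigr do rewrite bernL_Xn.
case: k => [|k]; first by rewrite big_ord1 bin0 mul1r derivC horner0 subr0.
by rewrite big_ord_recr /= bernoulli_rec binn mul1r derivXnS_horner0 addrAC subrr add0r.
Qed.

Lemma bernL_unique (F : {scalar {poly R}}) :
  (forall p, F (p \Po ('X + 1)) = F p + p^`().[0]) -> F =1 bernL.
Proof.
move=> F_shift; apply: eq_scalar_poly => k; rewrite /= bernL_Xn.
elim/ltn_ind: k => k IH.
have := F_shift 'X^(k.+1).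
rewrite comp_Xn_poly scalar_exp_Xadd1 big_ord_recr /= binn mul1r derivXnS_horner0.
rewrite addrC => /addrI; rewrite -(bernoulli_rec k) !big_ord_recr /= binSn.
under eq_bigr => j _ do rewrite IH //.
by move=> /addrI /mulfI; apply; rewrite pnatr_eq0.
Qed.

Lemma bernL_reflect (p : {poly R}) : bernL (p \Po (- 'X)) = bernL p + p^`().[0].
Proof.
apply/eqP; rewrite -subr_eq; apply/eqP.
apply: (@bernL_unique ((bernL \o comp_poly (- 'X)) \- (horner_eval 0 \o deriv))) => q /=.
rewrite !horner_evalE -!comp_polyA.
have -> : ('X + 1) \Po - 'X = - 'X + 1 :> {poly R}.
  by rewrite comp_polyD comp_polyX comp_polyC.
have := bernL_shift (q \Po (- 'X + 1)).
rewrite -comp_polyA comp_polyD raddfN /= comp_polyX comp_polyC opprD addrNK => ->.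
by rewrite !deriv_comp !hornerM !horner_comp !derivE !hornerE oppr0 add0r mulrN1 subrK.
Qed.

Lemma bernL_translate (p : {poly R}) c :
  bernL (p \Po ('X + (c + 1)%:P)) = bernL (p \Po ('X + c%:P)) + p^`().[c].
Proof.
have := bernL_shift (p \Po ('X + c%:P)).
rewrite -comp_polyA comp_polyD comp_polyX comp_polyC -addrA -polyCD [1 + c]addrC => ->.
by rewrite deriv_comp hornerM horner_comp !derivE !hornerE.
Qed.

Lemma bernL_antisym (q : {poly R}) : q \Po (- 'X - 4%:P) = - q ->
  bernL q = q^`().[-1] + q^`().[-2] / 2.
Proof.
move=> q_antisym.
have tr1 := bernL_translate q (-1).
have tr2 := bernL_translate q (-2).
have tr3 := bernL_translate q (-3).
have refl3 := bernL_reflect (q \Po ('X + (-3)%:P)).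
have q3_refl : (q \Po ('X + (-3)%:P)) \Po - 'X = - (q \Po ('X + (-1)%:P)).
  rewrite -(raddfN (comp_poly _)) /= -q_antisym -!comp_polyA; congr (q \Po _).
  rewrite comp_polyD comp_polyB !(raddfN (comp_poly _)) /= !comp_polyX !comp_polyC.
  ring.
rewrite q3_refl raddfN /= deriv_comp hornerM horner_comp !derivE !hornerE in refl3.
rewrite addNr polyC0 addr0 comp_polyXr in tr1.
rewrite (_ : -2 + 1 = -1) in tr2; last by ring.
rewrite (_ : -3 + 1 = -2) in tr3; last by ring.
lra.
Qed.

(* chebU_shift k = U_(k-1)(X/2 + 1), see chebU_pair_shift. *)
Definition chebU_shift k : {poly R} := \poly_(s < k) 'C(k + s, s.*2.+1)%:R.
Definition bstar_poly m : {poly R} := \poly_(r < m.+1) ('C(m + r, r.*2)%:R / (m + r)%:R).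

Lemma coef_chebU_shift k s : (chebU_shift k)`_s = 'C(k + s, s.*2.+1)%:R.
Proof. by rewrite coef_poly; case: ltnP => // le_ks; rewrite bin_small //; lia. Qed.

Lemma coef_bstar_poly m r : (bstar_poly m)`_r = 'C(m + r, r.*2)%:R / (m + r)%:R.
Proof. by rewrite coef_poly; case: ltnP => // le_mr; rewrite bin_small ?mul0r //; lia. Qed.

Lemma chebU_shift0 : chebU_shift 0 = 0.
Proof. by rewrite /chebU_shift poly_def big_ord0. Qed.

Lemma chebU_shift1 : chebU_shift 1 = 1.
Proof.
apply/polyP => s; rewrite coef_chebU_shift coef1.
by case: s => [|s] //=; rewrite bin_small //; lia.
Qed.

Lemma chebU_shiftSS k :
  chebU_shift k.+2 = ('X + 2%:P) * chebU_shift k.+1 - chebU_shift k.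
Proof.
apply/polyP => s; rewrite coefB mulrDl coefD coefXM coefCM !coef_chebU_shift.
case: s => [|s] /=.
  rewrite !addn0 !bin1 add0r; apply: (addIr k%:R).
  by rewrite subrK -natrM -!natrD; congr (_%:R); lia.
rewrite (_ : k.+2 + s.+1 = (k + s.+1).+2)%N; last by lia.
rewrite (_ : k.+1 + s = k + s.+1)%N; last by lia.
rewrite (_ : k.+1 + s.+1 = (k + s.+1).+1)%N; last by lia.
rewrite doubleS !binS; apply: (addIr 'C(k + s.+1, s.*2.+3)%:R).
by rewrite subrK -natrM -!natrD; congr (_%:R); lia.
Qed.

Lemma chebU_shift_antisym k :
  chebU_shift k \Po (- 'X - 4%:P) = (-1) ^+ k.+1 *: chebU_shift k.
Proof.
suff: chebU_shift k \Po (- 'X - 4%:P) = (-1) ^+ k.+1 *: chebU_shift k /\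
      chebU_shift k.+1 \Po (- 'X - 4%:P) = (-1) ^+ k.+2 *: chebU_shift k.+1 by case.
elim: k => [|k [IHk IHk1]].
  rewrite chebU_shift0 chebU_shift1 comp_poly0 scaler0 -polyC1 comp_polyC.
  by rewrite expr2 mulrN1 opprK scale1r.
split=> //; rewrite chebU_shiftSS comp_polyB comp_polyM IHk IHk1.
rewrite comp_polyD comp_polyX comp_polyC.
rewrite !exprS -!mul_polyC !polyCM polyCN polyC1; ring.
Qed.

Lemma chebU_shift_odd_m2 n : (chebU_shift n.*2.+1).[-2] = (-1) ^+ n.
Proof.
elim: n => [|n IHn]; first by rewrite chebU_shift1 hornerC.
rewrite doubleS chebU_shiftSS hornerD hornerN hornerM hornerD hornerX hornerC IHn.
by rewrite addNr mul0r add0r exprS mulN1r.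
Qed.

Lemma chebU_pair_shift k x :
  chebU_pair k x = ((chebU_shift k.+1).[2 * x - 2], (chebU_shift k.+2).[2 * x - 2]).
Proof.
have two : IZR 2 = 2 by rewrite -INRE.
elim: k => [|k IHk] /=.
  rewrite chebU_shiftSS chebU_shift1 chebU_shift0 subr0 mulr1 hornerC hornerD hornerX hornerC.
  by rewrite RmultE two subrK.
rewrite IHk /= [chebU_shift k.+3]chebU_shiftSS hornerD hornerN hornerM hornerD hornerX hornerC.
by rewrite RminusE !RmultE two subrK.
Qed.

Lemma bstarE m : bstar m = bernL (bstar_poly m).
Proof.
rewrite /bstar sum_f_R0E big_mkord (@bernL_widen m.+1) ?size_poly //.
apply: eq_bigr => i _; rewrite coef_bstar_poly C_binomial; last by have := ltn_ord i; lia.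
by rewrite (_ : (2 * i)%coq_nat = i.*2) ?INRE ?RdivE 1?mulrAC //; lia.
Qed.

Lemma deriv_bstar_poly m : (bstar_poly m)^`() = 2^-1 *: chebU_shift m.
Proof.
apply/polyP => s; rewrite coef_deriv coefZ coef_bstar_poly coef_chebU_shift doubleS.
have := mul_bin_diag (m + s.+1) s.*2.+1; rewrite (_ : (m + s.+1).-1 = m + s)%N; last by lia.
move=> /(congr1 (GRing.natmul (1 : R))); rewrite !natrM => e.
have m_s_neq0 : (m + s.+1)%:R != 0 :> R by rewrite pnatr_eq0; lia.
rewrite (_ : 'C(m + s, s.*2.+1)%:R = s.*2.+2%:R * 'C(m + s.+1, s.*2.+2)%:R / (m + s.+1)%:R);
  last by rewrite -e mulrAC mulfV ?mul1r.
rewrite (_ : s.*2.+2%:R = 2 * s.+1%:R :> R); last by rewrite -natrM; congr (_%:R); lia.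
rewrite -mulr_natr; field.
by rewrite nat1r -natrD.
Qed.

Lemma mul_bin_odd_diff m r : (0 < m)%N ->
  ((m + r) * 'C(m.+1 + r, r.*2.+1) =
   (m + r) * 'C(m.-1 + r, r.*2.+1) + m.*2 * 'C(m + r, r.*2))%N.
Proof.
move=> m_gt0; case: (leqP r m) => [le_rm|lt_mr]; last by rewrite !bin_small; lia.
set a := 'C(m.+1 + r, r.*2.+1); set b := 'C(m.-1 + r, r.*2.+1); set c := 'C(m + r, r.*2).
have eA : (r.*2.+1 * ((m + r) * a) = (m + r) * ((m + r).+1 * c))%N.
  by rewrite mulnCA /a (_ : m.+1 + r = (m + r).+1)%N // -mul_bin_diag.
have eB : (r.*2.+1 * ((m + r) * b) = (m.-1 + r - r.*2) * ((m + r - r.*2) * c))%N.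
  rewrite mulnCA /b (_ : m.-1 + r = (m + r).-1)%N; last by lia.
  rewrite mul_bin_left mulnCA mul_bin_down (_ : (m + r).-1 = m.-1 + r)%N //; lia.
have key : ((m + r) * (m + r).+1 =
            (m.-1 + r - r.*2) * (m + r - r.*2) + r.*2.+1 * m.*2)%N.
  case: (ltngtP r m) => [?|?|<-]; [|lia|]; last first.
    by rewrite (_ : r.-1 + r - r.*2 = 0)%N ?mul0n ?add0n; nia.
  have [e ->] : exists e, m = (r + e).+1 by exists (m - r - 1)%N; lia.
  rewrite (_ : (r + e).+1.-1 + r - r.*2 = e)%N; last by lia.
  rewrite (_ : (r + e).+1 + r - r.*2 = e.+1)%N; last by lia.
  by rewrite -!muln2; nia.
apply/eqP; rewrite -(eqn_pmul2l (ltn0Sn r.*2)); apply/eqP.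
by rewrite mulnDr eA eB !mulnA -mulnDl key.
Qed.

Lemma bstar_poly_chebU_shift m : (0 < m)%N ->
  m.*2%:R *: bstar_poly m = chebU_shift m.+1 - chebU_shift m.-1.
Proof.
move=> m_gt0; apply/polyP => r.
rewrite coefZ coefB coef_bstar_poly !coef_chebU_shift.
have m_r_neq0 : (m + r)%:R != 0 :> R by rewrite pnatr_eq0; lia.
apply: (mulfI m_r_neq0); rewrite mulrCA (mulrCA (m + r)%:R) mulfV // mulr1.
rewrite mulrBr -!natrM; apply: (addIr ((m + r) * 'C(m.-1 + r, r.*2.+1))%:R).
by rewrite subrK -natrD mul_bin_odd_diff // addnC.
Qed.

Lemma bstar_poly_antisym n :
  bstar_poly n.*2.+1 \Po (- 'X - 4%:P) = - bstar_poly n.*2.+1.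
Proof.
have two_m_neq0 : n.*2.+1.*2%:R != 0 :> R by rewrite pnatr_eq0 double_eq0.
have sgn_odd k : (-1) ^+ k.*2.+1 = -1 :> R by rewrite -signr_odd /= odd_double.
rewrite -[bstar_poly _](scalerK two_m_neq0) bstar_poly_chebU_shift //= comp_polyZ comp_polyB.
rewrite !chebU_shift_antisym -doubleS !sgn_odd !scaleN1r -scalerN opprB.
by rewrite opprK addrC.
Qed.

Lemma bstar_odd n : bstar n.*2.+1 = (-1) ^+ n / 4 + 2^-1 * (chebU_shift n.*2.+1).[-1].
Proof.
rewrite bstarE (bernL_antisym _ (bstar_poly_antisym n)) !deriv_bstar_poly !hornerZ.
by rewrite chebU_shift_odd_m2 addrC; congr (_ + _); field.
Qed.

Local Open Scope R_scope.

Theorem corollary5p1 (n : nat) :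
  bstar (2 * n + 1) = (-1) ^ n / 4 + / 2 * chebU (2 * n) (/ 2) /\
  (-1) ^ n / 4 + / 2 * chebU (2 * n) (/ 2)
    = (-1) ^ n / 4 + / sqrt 3 * sin (INR (2 * n + 1) * PI / 3).
Proof.
split; last by rewrite chebU_half_sin addn1.
rewrite (_ : (2 * n + 1)%N = n.*2.+1) ?bstar_odd /chebU; last by lia.
rewrite (_ : (2 * n)%N = n.*2) ?chebU_pair_shift /= ?RpowE; last by lia.
have two : IZR 2 = 2%:R by rewrite -INRE INR_IZR_INZ.
have four : IZR 4 = 4%:R by rewrite -INRE INR_IZR_INZ.
have two_half : (2 / 2 - 2 = -1 :> R)%R by rewrite divff ?pnatr_eq0 //; ring.
by rewrite RmultE RinvE RdivE two four two_half.
Qed.
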